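(* Let $k<n$ be positive integers. If there exists an antipodal $k$-splitting of $Q_2^n$, then there exists an antipodal $k$-splitting of $Q_2^{n+1}$.
   Context: $Q_2^n=\{0,1\}^n$. For $0\le m\le n$, an $m$-face of $Q_2^n$ is given by a tuple $a=(a_1,\dots,a_n)\in\{0,1,*\}^n$ with exactly $m$ entries equal to $*$; it denotes the set $\{x\in Q_2^n : x_i=a_i \text{ whenever } a_i\in\{0,1\}\}$. The direction of a face is the set of positions of its asterisks; two faces are parallel if they have the same direction, and two parallel faces $a,b$ are antipodal if $b_i=1-a_i$ at every non-asterisk position $i$. An antipodal $k$-splitting of $Q_2^n$ is a collection of exactly $2^k$ $(n-k)$-faces whose union is $Q_2^n$ and which contains no pair of parallel non-antipodal faces. *)

From mathcomp Require Import all_boot.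
Set Implicit Arguments. Unset Strict Implicit. Unset Printing Implicit Defensive.

(* A face of Q_2^n: a tuple in {0,1,*}^n, encoded as a finite function
   'I_n -> option bool, where None stands for the asterisk *. *)
Definition face (n : nat) := {ffun 'I_n -> option bool}.
Definition vertex (n : nat) := {ffun 'I_n -> bool}.

Definition direction n (a : face n) : {set 'I_n} := [set i | a i == None].

Definition face_dim n (a : face n) : nat := #|direction a|.

Definition in_face n (x : vertex n) (a : face n) : bool :=
  [forall i, if a i is Some b then x i == b else true].

Definition parallel n (a b : face n) : bool := direction a == direction b.

Definition antipodal n (a b : face n) : bool :=
  parallel a b &&
  [forall i, if a i is Some c then b i == Some (~~ c) else true].

Definition antipodal_splitting (n k : nat) (S : {set face n}) : Prop :=
  [/\ #|S| = 2 ^ k,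
      (forall a, a \in S -> face_dim a = n - k),
      (forall x : vertex n, exists2 a, a \in S & in_face x a) &
      (forall a b, a \in S -> b \in S -> a != b -> parallel a b -> antipodal a b)].
Arguments antipodal_splitting : clear implicits.

From mathcomp Require Import all_boot.
Set Implicit Arguments. Unset Strict Implicit. Unset Printing Implicit Defensive.

(* Appending one free coordinate (an asterisk in the new last position) to
   every face of a splitting of Q_2^n keeps the number of faces, raises every
   dimension by one, and preserves covering, parallelism and antipodality,
   since all of these are decided on the first n coordinates. *)

Definition face_ext n (a : face n) : face n.+1 :=
  [ffun i => if unlift ord_max i is Some j then a j else None].

Definition vertex_restr n (x : vertex n.+1) : vertex n :=
  [ffun j => x (lift ord_max j)].

Section FaceExtension.

Variable n : nat.
Implicit Types a b : face n.

Lemma face_ext_lift a (j : 'I_n) : face_ext a (lift ord_max j) = a j.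
Proof. by rewrite ffunE liftK. Qed.

Lemma face_ext_max a : face_ext a ord_max = None.
Proof. by rewrite ffunE unlift_none. Qed.

Lemma face_ext_inj : injective (@face_ext n).
Proof. by move=> a b eq_ab; apply/ffunP => j; rewrite -!(face_ext_lift _ j) eq_ab. Qed.

Lemma mem_direction_ext_lift a (j : 'I_n) :
  (lift ord_max j \in direction (face_ext a)) = (j \in direction a).
Proof. by rewrite !inE face_ext_lift. Qed.

Lemma direction_face_ext a :
  direction (face_ext a) = ord_max |: (lift ord_max @: direction a).
Proof.
apply/setP => i; rewrite !inE.
case: (unliftP ord_max i) => [j ->|->]; last by rewrite face_ext_max eqxx.
rewrite face_ext_lift mem_imset ?inE; last exact: lift_inj.
by rewrite [lift _ _ == _]eq_sym (negbTE (neq_lift _ _)).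
Qed.

Lemma face_dim_ext a : face_dim (face_ext a) = (face_dim a).+1.
Proof.
rewrite /face_dim direction_face_ext cardsU1 card_imset; last exact: lift_inj.
suff -> : (ord_max \in lift ord_max @: direction a) = false by [].
by apply/imsetP => -[j _ max_j]; have := neq_lift ord_max j; rewrite -max_j eqxx.
Qed.

Lemma in_face_ext (x : vertex n.+1) a :
  in_face x (face_ext a) = in_face (vertex_restr x) a.
Proof.
apply/forallP/forallP => [x_a j | x_a i].
  by have := x_a (lift ord_max j); rewrite face_ext_lift ffunE.
case: (unliftP ord_max i) => [j ->|->]; last by rewrite face_ext_max.
by have := x_a j; rewrite face_ext_lift ffunE.
Qed.

Lemma parallel_ext a b : parallel (face_ext a) (face_ext b) = parallel a b.
Proof.
rewrite /parallel !direction_face_ext.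
apply/eqP/eqP => [dir_ab | -> //]; apply/setP => j.
rewrite -(mem_direction_ext_lift a) -(mem_direction_ext_lift b).
by rewrite !direction_face_ext dir_ab.
Qed.

Lemma antipodal_ext a b : antipodal (face_ext a) (face_ext b) = antipodal a b.
Proof.
rewrite /antipodal parallel_ext; congr (_ && _).
apply/forallP/forallP => [opp_ab j | opp_ab i].
  by have := opp_ab (lift ord_max j); rewrite !face_ext_lift.
case: (unliftP ord_max i) => [j ->|->]; last by rewrite face_ext_max.
by rewrite !face_ext_lift; apply: opp_ab.
Qed.

Lemma antipodal_splitting_ext k (S : {set face n}) :
  k <= n -> antipodal_splitting n k S ->
  antipodal_splitting n.+1 k (@face_ext n @: S).
Proof.
move=> le_kn [card_S dim_S cover_S antipodal_S]; split.
- by rewrite card_imset //; exact: face_ext_inj.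
- by move=> _ /imsetP[a aS ->]; rewrite face_dim_ext dim_S // subSn.
- move=> x; have [a aS x_a] := cover_S (vertex_restr x).
  by exists (face_ext a); [exact: imset_f | rewrite in_face_ext].
- move=> _ _ /imsetP[a aS ->] /imsetP[b bS ->] ext_ab.
  rewrite parallel_ext antipodal_ext; apply: antipodal_S => //.
  by apply: contraNneq ext_ab => ->.
Qed.

End FaceExtension.

Theorem proposition1 (n k : nat) :
  0 < k -> k < n ->
  (exists S : {set face n}, antipodal_splitting n k S) ->
  exists S : {set face n.+1}, antipodal_splitting n.+1 k S.
Proof.
move=> _ lt_kn [S split_S].
by exists (@face_ext n @: S); apply: antipodal_splitting_ext (ltnW lt_kn) split_S.
Qed.
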